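(* Let $(S,\mathcal C)$ be a connectoid and $T$ a rooted undirected tree with $V(T)\subseteq S$. Then $T$ is a weak normal tree of $(S,\mathcal C)$ if and only if $K_t^T\cap V(T)=\mathrm{Up}_T(t)$ for every $t\in V(T)$. Furthermore, if $T$ is a weak normal tree with $V(T)=S$, then $K_t^T=\mathrm{Up}_T(t)$ for every $t\in V(T)$.
   Context: A connectoid is given by a set $S$ and a set $\mathcal F$ of finite subsets of $S$ such that (i) $F\cup F'\in\mathcal F$ whenever $F,F'\in\mathcal F$ and $F\cap F'\neq\emptyset$, and (ii) $\emptyset\in\mathcal F$ and $\{s\}\in\mathcal F$ for every $s\in S$. A set $C\subseteq S$ is connected if for all $x,y\in C$ there is $F\in\mathcal F$ with $F\subseteq C$ and $x,y\in F$; $\mathcal C$ is the set of connected sets. For $S'\subseteq S$, a component of $S'$ is a maximal connected subset of $S'$, and $\mathcal K(S')$ is the set of components of $S'$. For a rooted tree $T$ with tree order $\le_T$ (root is the minimum) and $t\in V(T)$: $\mathrm{Up}_T(t)=\{x\in V(T):t\le_T x\}$, $\mathrm{Down}^\circ_T(t)=\{x\in V(T):x<_T t\}$, and $K_t^T$ denotes the element of $\mathcal K(S\setminus\mathrm{Down}^\circ_T(t))$ containing $t$. A weak normal tree of $(S,\mathcal C)$ is a rooted undirected tree $T$ with $V(T)\subseteq S$ such that (1) for every $C\in\mathcal C$ and every two $\le_T$-incomparable $u,v\in C\cap V(T)$ there is $w\in C$ with $w\le_T u$ and $w\le_T v$, and (2) for all $u\le_T v$ in $V(T)$ there is $C\in\mathcal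 C$ containing $u$ and $v$ with $C\cap\mathrm{Down}^\circ_T(u)=\emptyset$. *)

From Stdlib Require Import List.
Import ListNotations.
Set Implicit Arguments.

Section Defs.
Variable S : Type.

Definition subset (A B : S -> Prop) : Prop := forall x, A x -> B x.

Definition finite_set (A : S -> Prop) : Prop :=
  exists l : list S, forall x, A x <-> In x l.

Definition connectoid (F : (S -> Prop) -> Prop) : Prop :=
  (forall A, F A -> finite_set A) /\
  (forall A B, F A -> F B -> (exists x, A x /\ B x) ->
     F (fun x => A x \/ B x)) /\
  F (fun _ => False) /\
  (forall s, F (fun x => x = s)).

Definition connected (F : (S -> Prop) -> Prop) (C : S -> Prop) : Prop :=
  forall x y, C x -> C y ->
    exists A, F A /\ subset A C /\ A x /\ A y.

Definition component_of (F : (S -> Prop) -> Prop) (X K : S -> Prop) : Prop :=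
  subset K X /\ connected F K /\
  (forall K', subset K K' -> subset K' X -> connected F K' -> subset K' K).

Fixpoint adj_chain (E : S -> S -> Prop) (p : list S) : Prop :=
  match p with
  | x :: ((y :: _) as q) => E x y /\ adj_chain E q
  | _ => True
  end.

Definition is_path (V : S -> Prop) (E : S -> S -> Prop) (a b : S) (p : list S) : Prop :=
  (exists q, p = a :: q /\ last p a = b) /\
  NoDup p /\ Forall V p /\ adj_chain E p.

Definition simple_graph (V : S -> Prop) (E : S -> S -> Prop) : Prop :=
  (forall x y, E x y -> V x /\ V y) /\
  (forall x y, E x y -> E y x) /\
  (forall x, ~ E x x).

Definition has_cycle (V : S -> Prop) (E : S -> S -> Prop) : Prop :=
  exists x p, 2 <= length p /\ NoDup (x :: p) /\ Forall V (x :: p) /\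
    adj_chain E (x :: p) /\ E (last p x) x.

Definition tree (V : S -> Prop) (E : S -> S -> Prop) : Prop :=
  simple_graph V E /\
  (forall a b, V a -> V b -> exists p, is_path V E a b p) /\
  ~ has_cycle V E.

Definition rooted_tree (V : S -> Prop) (E : S -> S -> Prop) (r : S) : Prop :=
  tree V E /\ V r.

Definition tree_le (V : S -> Prop) (E : S -> S -> Prop) (r : S) (x y : S) : Prop :=
  V x /\ V y /\ exists p, is_path V E r y p /\ In x p.

Definition tree_lt (V : S -> Prop) (E : S -> S -> Prop) (r : S) (x y : S) : Prop :=
  tree_le V E r x y /\ x <> y.

Definition Up (V : S -> Prop) (E : S -> S -> Prop) (r t : S) : S -> Prop :=
  fun x => tree_le V E r t x.

Definition Down_open (V : S -> Prop) (E : S -> S -> Prop) (r t : S) : S -> Prop :=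
  fun x => tree_lt V E r x t.

Definition weak_normal_tree (F : (S -> Prop) -> Prop)
    (V : S -> Prop) (E : S -> S -> Prop) (r : S) : Prop :=
  (forall C, connected F C -> forall u v, C u -> C v -> V u -> V v ->
     ~ tree_le V E r u v -> ~ tree_le V E r v u ->
     exists w, C w /\ tree_le V E r w u /\ tree_le V E r w v) /\
  (forall u v, tree_le V E r u v ->
     exists C, connected F C /\ C u /\ C v /\
       (forall x, C x -> ~ Down_open V E r u x)).

Definition outside_down (V : S -> Prop) (E : S -> S -> Prop) (r t : S) : S -> Prop :=
  fun x => ~ Down_open V E r t x.

End Defs.

(** If [T] is weak normal, a tree vertex [x] of [K_t] not above [t] is either
    below [t], impossible as [K_t] avoids [Down°(t)], or incomparable to [t];
    then axiom (1) yields a common lower bound in [K_t], which again lies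
    strictly below [t]. Axiom (2) places [Up(t)] inside [K_t].
    Conversely, let a connected [C] meet [V(T)] in [u] and let [t] be the first
    vertex of [C] on the root path to [u]. Root paths are unique because [T] is
    acyclic, so every vertex strictly below [t] occurs earlier on that path;
    hence [C] avoids [Down°(t)], lies in [K_t], and all its tree vertices are
    above [t]. Axiom (2) for [u <= v] is witnessed by [K_u] itself. *)

From Stdlib Require Import List Classical Lia.
Import ListNotations.

Lemma last_cons_default {A : Type} (x : A) l d d' :
  last (x :: l) d = last (x :: l) d'.
Proof.
  revert x; induction l as [|y l IH]; intros x; [reflexivity|].
  exact (IH y).
Qed.

Lemma In_last_cons {A : Type} (x : A) l d : In (last (x :: l) d) (x :: l).
Proof.
  revert x; induction l as [|y l IH]; intros x; [now left|].
  right; exact (IH y).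
Qed.

Lemma last_cons_app {A : Type} (x : A) l s d :
  last (x :: l ++ s) d = last (last (x :: l) x :: s) d.
Proof.
  revert x; induction l as [|y l IH]; intros x; [reflexivity|].
  change (last (y :: l ++ s) d = last (last (y :: l) x :: s) d).
  rewrite (last_cons_default y l x y). apply IH.
Qed.

Lemma last_app_cons {A : Type} (l1 : list A) y l2 d :
  last (l1 ++ y :: l2) d = last (y :: l2) d.
Proof.
  induction l1 as [|a l1 IH]; [reflexivity|].
  destruct l1; exact IH.
Qed.

Lemma rev_cons_last {A : Type} (y : A) l :
  exists s, rev (y :: l) = last (y :: l) y :: s.
Proof.
  destruct (rev (y :: l)) as [|b s] eqn:Hr.
  - apply (f_equal (@length A)) in Hr. rewrite length_rev in Hr. discriminate.
  - exists s. rewrite <- (rev_involutive (y :: l)), Hr. simpl. now rewrite last_last.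
Qed.

Lemma split_at_first {A : Type} (P : A -> Prop) l :
  (exists y, In y l /\ P y) ->
  exists l1 t l2, l = l1 ++ t :: l2 /\ P t /\ forall z, In z l1 -> ~ P z.
Proof.
  induction l as [|a l IH]; intros [y [Hy Py]]; [destruct Hy|].
  destruct (classic (P a)) as [Ha|Ha].
  - exists [], a, l. repeat split; auto.
  - destruct Hy as [<-|Hy]; [contradiction|].
    destruct IH as [l1 [t [l2 [-> [Pt Hn]]]]]; [eauto|].
    exists (a :: l1), t, l2. repeat split; auto.
    intros z [<-|Hz]; auto.
Qed.

Section Walks.
Context {A : Type} {E : A -> A -> Prop}.

Lemma adj_chain_app l1 x l2 :
  adj_chain E (l1 ++ x :: l2) <-> adj_chain E (l1 ++ [x]) /\ adj_chain E (x :: l2).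
Proof.
  induction l1 as [|a [|b l1] IH]; simpl in *.
  - tauto.
  - destruct l2; simpl; tauto.
  - rewrite IH. tauto.
Qed.

Lemma adj_chain_cons_app x l s :
  adj_chain E (x :: l) -> adj_chain E (last (x :: l) x :: s) ->
  adj_chain E (x :: l ++ s).
Proof.
  revert x; induction l as [|y l IH]; intros x; [auto|].
  intros [Hxy Hl] Hs. split; [exact Hxy|].
  apply IH; [exact Hl|]. now rewrite (last_cons_default y l y x).
Qed.

Lemma adj_chain_rev :
  (forall x y, E x y -> E y x) -> forall l, adj_chain E l -> adj_chain E (rev l).
Proof.
  intros Hsym; induction l as [|a [|b l] IH]; intros H; simpl; auto.
  destruct H as [Hab H].
  change (adj_chain E ((rev l ++ [b]) ++ [a])).
  rewrite <- app_assoc. apply adj_chain_app. split; [exact (IH H)|].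
  simpl; auto.
Qed.

Lemma adj_chain_Forall (V : A -> Prop) {x l} :
  (forall u v, E u v -> V u /\ V v) -> V x -> adj_chain E (x :: l) ->
  Forall V (x :: l).
Proof.
  intros HE; revert x; induction l as [|y l IH]; intros x Vx Hc; [auto|].
  destruct Hc as [Hxy Hc]. constructor; [exact Vx|].
  apply IH; [exact (proj2 (HE x y Hxy))|exact Hc].
Qed.

Lemma walk_to_path {y w} :
  adj_chain E (y :: w) ->
  exists p, NoDup (y :: p) /\ adj_chain E (y :: p) /\
    last (y :: p) y = last (y :: w) y /\ incl p w.
Proof.
  revert y; induction w as [|z w IH]; intros y Hw.
  - exists []. repeat split; [repeat constructor; auto|apply incl_refl].
  - destruct Hw as [Hyz Hw]. destruct (IH z Hw) as [p [Hnd [Hc [Hl Hi]]]].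
    destruct (classic (In y (z :: p))) as [Hin|Hnin].
    + (* cut the loop through [y] *)
      apply in_split in Hin as [l1 [l2 Hsplit]]. rewrite Hsplit in Hnd, Hc, Hl.
      exists l2. repeat split.
      * exact (NoDup_app_remove_l _ _ Hnd).
      * exact (proj2 (proj1 (adj_chain_app _ _ _) Hc)).
      * rewrite last_app_cons in Hl.
        change (last (y :: l2) y = last (z :: w) y).
        rewrite <- (last_cons_default _ _ z), Hl. apply last_cons_default.
      * intros v Hv. assert (Hzp : In v (z :: p)).
        { rewrite Hsplit. apply in_or_app. right; right; exact Hv. }
        destruct Hzp as [<-|Hzp]; [now left|right; auto].
    + exists (z :: p). repeat split; auto.
      * constructor; assumption.
      * change (last (z :: p) y = last (z :: w) y).
        rewrite (last_cons_default z p y z), Hl. apply last_cons_default.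
      * intros v [<-|Hv]; [now left|right; auto].
Qed.

End Walks.

Section Paths.
Context {S : Type} {V : S -> Prop} {E : S -> S -> Prop}.
Hypothesis Hsimple : simple_graph V E.

Lemma is_path_single {a b} : is_path V E a b [a] -> a = b.
Proof. intros [[q [_ Hl]] _]. exact Hl. Qed.

Lemma is_path_cons {a b x q} :
  is_path V E a b (a :: x :: q) ->
  E a x /\ ~ In a (x :: q) /\ is_path V E x b (x :: q).
Proof.
  intros [[_ [_ Hl]] [Hnd [HV [Hax Hc]]]].
  apply NoDup_cons_iff in Hnd as [Ha Hnd].
  repeat split; auto.
  - exists q; split; [reflexivity|].
    change (last (x :: q) a = b) in Hl. now rewrite (last_cons_default x q x a).
  - exact (Forall_inv_tail HV).
Qed.

Lemma is_path_cons_neq {a b x q} : is_path V E a b (a :: x :: q) -> a <> b.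
Proof.
  intros Hp; destruct (is_path_cons Hp) as [_ [Ha [[_ [_ Hl]] _]]].
  intros ->. apply Ha. rewrite <- Hl at 1. apply In_last_cons.
Qed.

Lemma is_path_prefix {r u l1 t l2} :
  is_path V E r u (l1 ++ t :: l2) -> is_path V E r t (l1 ++ [t]).
Proof.
  intros [[q [Hq _]] [Hnd [HV Hc]]].
  change (NoDup (l1 ++ [t] ++ l2)) in Hnd; change (Forall V (l1 ++ [t] ++ l2)) in HV.
  rewrite app_assoc in Hnd, HV.
  split; [|split; [|split]].
  - assert (Hr : exists q', l1 ++ [t] = r :: q').
    { destruct l1 as [|a l1]; injection Hq as -> _; eexists; reflexivity. }
    destruct Hr as [q' Hq']. exists q'. split; [exact Hq'|apply last_last].
  - exact (NoDup_app_remove_r _ _ Hnd).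
  - exact (proj1 (proj1 (Forall_app _ _ _) HV)).
  - exact (proj1 (proj1 (adj_chain_app _ _ _) Hc)).
Qed.

(* Going from [x] to [b] along one path and back to [y] along the other gives
   a walk avoiding [a], which closes into a cycle through [a]. *)
Lemma has_cycle_two_branches {a b x y px qy} :
  E a x -> E a y -> x <> y ->
  is_path V E x b (x :: px) -> is_path V E y b (y :: qy) ->
  ~ In a (x :: px) -> ~ In a (y :: qy) -> has_cycle V E.
Proof.
  destruct Hsimple as [HE [Hsym _]].
  intros Hax Hay Hxy [[_ [_ Hlx]] [_ [_ Hcx]]] [[_ [_ Hly]] [_ [_ Hcy]]] Hapx Haqy.
  destruct (rev_cons_last y qy) as [s Hs]. rewrite Hly in Hs.
  assert (Hwalk : adj_chain E (x :: px ++ s)).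
  { apply adj_chain_cons_app; [exact Hcx|]. rewrite Hlx, <- Hs.
    exact (adj_chain_rev Hsym _ Hcy). }
  assert (Hend : last (x :: px ++ s) x = y).
  { rewrite last_cons_app, Hlx, <- Hs. simpl rev. apply last_last. }
  destruct (walk_to_path Hwalk) as [p [Hnd [Hc [Hl Hincl]]]].
  rewrite Hend in Hl.
  exists a, (x :: p). repeat split.
  - destruct p; [simpl in Hl; congruence|simpl; lia].
  - constructor; [|exact Hnd].
    intros [->|Hp]; [apply Hapx; now left|].
    apply Hincl, in_app_or in Hp as [Hp|Hp]; [apply Hapx; now right|].
    apply Haqy, in_rev. rewrite Hs. now right.
  - exact (@adj_chain_Forall _ _ V a (x :: p) HE (proj1 (HE a x Hax)) (conj Hax Hc)).
  - exact Hax.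
  - exact Hc.
  - rewrite (last_cons_default x p a x), Hl. auto.
Qed.

Hypothesis Hacyclic : ~ has_cycle V E.

Lemma is_path_unique {a b p p'} : is_path V E a b p -> is_path V E a b p' -> p = p'.
Proof.
  intros Hp Hp'.
  destruct (proj1 Hp) as [q [-> _]]. destruct (proj1 Hp') as [q' [-> _]].
  revert a q' Hp Hp'; induction q as [|x q IH]; intros a q' Hp Hp'.
  - apply is_path_single in Hp as <-.
    destruct q' as [|y q']; [reflexivity|].
    now destruct (is_path_cons_neq Hp').
  - destruct q' as [|y q'].
    + apply is_path_single in Hp' as <-. now destruct (is_path_cons_neq Hp).
    + destruct (is_path_cons Hp) as [Hax [Hapx Hpx]].
      destruct (is_path_cons Hp') as [Hay [Haqy Hqy]].
      destruct (classic (x = y)) as [<-|Hxy].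
      * f_equal. exact (IH x q' Hpx Hqy).
      * destruct Hacyclic.
        exact (has_cycle_two_branches Hax Hay Hxy Hpx Hqy Hapx Haqy).
Qed.

Lemma tree_lt_In_prefix {r u l1 t l2 z} :
  is_path V E r u (l1 ++ t :: l2) -> tree_lt V E r z t -> In z l1.
Proof.
  intros Hp [[_ [_ [p [Hpt Hz]]]] Hne].
  rewrite (is_path_unique Hpt (is_path_prefix Hp)) in Hz.
  apply in_app_or in Hz as [Hz|[Hz|[]]]; [exact Hz|congruence].
Qed.

End Paths.

Definition component_at {S : Type} (F : (S -> Prop) -> Prop) (X : S -> Prop) (t : S) :
    S -> Prop :=
  fun x => exists C, connected F C /\ subset C X /\ C t /\ C x.

Section Components.
Context {S : Type} {F : (S -> Prop) -> Prop}.
Hypothesis HF : connectoid F.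

Lemma connected_link {C1 C2 D t x y} :
  connected F C1 -> connected F C2 -> subset C1 D -> subset C2 D ->
  C1 t -> C2 t -> C1 x -> C2 y -> exists A, F A /\ subset A D /\ A x /\ A y.
Proof.
  intros H1 H2 S1 S2 C1t C2t C1x C2y. destruct HF as [_ [Hunion _]].
  destruct (H1 x t C1x C1t) as [A [FA [SA [Ax At]]]].
  destruct (H2 t y C2t C2y) as [B [FB [SB [Bt By]]]].
  exists (fun z => A z \/ B z). repeat split; auto.
  - apply Hunion; eauto.
  - intros z [Hz|Hz]; [apply S1, SA|apply S2, SB]; exact Hz.
Qed.

Lemma connected_union {C1 C2 t} :
  connected F C1 -> connected F C2 -> C1 t -> C2 t ->
  connected F (fun z => C1 z \/ C2 z).
Proof.
  intros H1 H2 C1t C2t x y Hx Hy.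
  assert (S1 : subset C1 (fun z => C1 z \/ C2 z)) by (intros z; now left).
  assert (S2 : subset C2 (fun z => C1 z \/ C2 z)) by (intros z; now right).
  destruct Hx as [Hx|Hx], Hy as [Hy|Hy].
  - exact (connected_link H1 H1 S1 S1 C1t C1t Hx Hy).
  - exact (connected_link H1 H2 S1 S2 C1t C2t Hx Hy).
  - exact (connected_link H2 H1 S2 S1 C2t C1t Hx Hy).
  - exact (connected_link H2 H2 S2 S2 C2t C2t Hx Hy).
Qed.

Lemma component_of_contains {X K C t} :
  component_of F X K -> K t -> connected F C -> subset C X -> C t -> subset C K.
Proof.
  intros [KX [Kc Kmax]] Kt Cc CX Ct z Cz.
  apply (Kmax (fun w => K w \/ C w)).
  - intros w Kw; now left.
  - intros w [Kw|Cw]; auto.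
  - exact (connected_union Kc Cc Kt Ct).
  - now right.
Qed.

Lemma component_at_self {X t} : X t -> component_at F X t t.
Proof.
  intros Xt. destruct HF as [_ [_ [_ Hsingle]]].
  exists (fun z => z = t). repeat split.
  - intros x y -> ->. exists (fun z => z = t). repeat split; auto.
    intros z Hz; exact Hz.
  - intros z ->; exact Xt.
Qed.

Lemma component_at_component {X t} : X t -> component_of F X (component_at F X t).
Proof.
  intros Xt. repeat split.
  - intros z [C [_ [CX [_ Cz]]]]. exact (CX z Cz).
  - intros x y [C1 [H1 [S1 [C1t C1x]]]] [C2 [H2 [S2 [C2t C2y]]]].
    apply (connected_link H1 H2 (t := t)); auto; intros z Cz; [exists C1|exists C2]; auto.
  - intros K' HK' K'X K'c z K'z. exists K'.
    repeat split; auto. exact (HK' t (component_at_self Xt)).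
Qed.

End Components.

Definition component_trace_is_up {S : Type} (F : (S -> Prop) -> Prop)
    (V : S -> Prop) (E : S -> S -> Prop) (r : S) : Prop :=
  forall t, V t -> forall K, component_of F (outside_down V E r t) K -> K t ->
    forall x, (K x /\ V x) <-> Up V E r t x.

Section WeakNormalTrees.
Context {S : Type} {F : (S -> Prop) -> Prop} {V : S -> Prop} {E : S -> S -> Prop} {r : S}.
Hypothesis HF : connectoid F.

Lemma outside_down_self t : outside_down V E r t t.
Proof. intros [_ Hne]. now apply Hne. Qed.

Lemma component_trace_is_up_of_weak_normal_tree :
  weak_normal_tree F V E r -> component_trace_is_up F V E r.
Proof.
  intros [Hsep Hconn] t Vt K HK Kt x. split.
  - intros [Kx Vx]. destruct HK as [KX [Kc _]].
    destruct (classic (tree_le V E r t x)) as [Htx|Ntx]; [exact Htx|].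
    exfalso.
    destruct (classic (tree_le V E r x t)) as [Hxt|Nxt].
    + apply (KX x Kx). split; [exact Hxt|]. intros ->. contradiction.
    + destruct (Hsep K Kc t x Kt Kx Vt Vx Ntx Nxt) as [w [Kw [Hwt Hwx]]].
      apply (KX w Kw). split; [exact Hwt|]. intros ->. contradiction.
  - intros Hup. destruct (Hconn t x Hup) as [C [Cc [Ct [Cx CX]]]].
    split; [|exact (proj1 (proj2 Hup))].
    exact (component_of_contains HF HK Kt Cc CX Ct x Cx).
Qed.

Hypothesis Htree : rooted_tree V E r.
Hypothesis Htrace : component_trace_is_up F V E r.

Lemma component_at_down_Up {t x} :
  V t -> component_at F (outside_down V E r t) t x -> V x -> Up V E r t x.
Proof.
  intros Vt Kx Vx. apply (Htrace t Vt _ (component_at_component HF (outside_down_self t))).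
  - exact (component_at_self HF (outside_down_self t)).
  - split; assumption.
Qed.

Lemma weak_normal_separation {C u v} :
  connected F C -> C u -> C v -> V u -> V v ->
  exists w, C w /\ tree_le V E r w u /\ tree_le V E r w v.
Proof.
  destruct Htree as [[Hsimple [Hpaths Hacyclic]] Vr].
  intros Cc Cu Cv Vu Vv.
  destruct (Hpaths r u Vr Vu) as [p Hp].
  assert (Hup : In u p).
  { destruct Hp as [[q [-> Hl]] _]. rewrite <- Hl. apply In_last_cons. }
  destruct (split_at_first C p) as [l1 [t [l2 [-> [Ct Hfirst]]]]]; [eauto|].
  assert (Htu : tree_le V E r t u).
  { assert (Htp : In t (l1 ++ t :: l2)) by (apply in_or_app; right; now left).
    split; [|split; [exact Vu|exists (l1 ++ t :: l2); split; [exact Hp|exact Htp]]].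
    destruct Hp as [_ [_ [HV _]]]. exact (proj1 (Forall_forall _ _) HV t Htp). }
  assert (CX : subset C (outside_down V E r t)).
  { intros z Cz Hzt. exact (Hfirst z (tree_lt_In_prefix Hsimple Hacyclic Hp Hzt) Cz). }
  exists t. split; [exact Ct|split; [exact Htu|]].
  apply (component_at_down_Up (proj1 Htu)); [|exact Vv].
  exists C. repeat split; assumption.
Qed.

Lemma weak_normal_connection u v :
  tree_le V E r u v ->
  exists C, connected F C /\ C u /\ C v /\ (forall x, C x -> ~ Down_open V E r u x).
Proof.
  intros Huv.
  pose proof (component_at_component HF (outside_down_self u)) as Hcomp.
  pose proof (component_at_self HF (outside_down_self u)) as Hself.
  exists (component_at F (outside_down V E r u) u).
  split; [exact (proj1 (proj2 Hcomp))|split; [exact Hself|split; [|exact (proj1 Hcomp)]]].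
  exact (proj1 (proj2 (Htrace u (proj1 Huv) _ Hcomp Hself v) Huv)).
Qed.

Lemma weak_normal_tree_of_component_trace : weak_normal_tree F V E r.
Proof.
  split.
  - intros C Cc u v Cu Cv Vu Vv _ _. exact (weak_normal_separation Cc Cu Cv Vu Vv).
  - exact weak_normal_connection.
Qed.

End WeakNormalTrees.

Theorem proposition2p4 (S : Type) (F : (S -> Prop) -> Prop)
  (V : S -> Prop) (E : S -> S -> Prop) (r : S) :
  connectoid F -> rooted_tree V E r ->
  (weak_normal_tree F V E r <->
     (forall t, V t -> forall K, component_of F (outside_down V E r t) K -> K t ->
        forall x, (K x /\ V x) <-> Up V E r t x)) /\
  (weak_normal_tree F V E r -> (forall x, V x) ->
     forall t, V t -> forall K, component_of F (outside_down V E r t) K -> K t ->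
        forall x, K x <-> Up V E r t x).
Proof.
  intros HF Htree.
  pose proof (@component_trace_is_up_of_weak_normal_tree _ _ V E r HF) as Htrace.
  split; [split|].
  - exact Htrace.
  - exact (weak_normal_tree_of_component_trace HF Htree).
  - intros Hw Vall t Vt K HK Kt x.
    rewrite <- (Htrace Hw t Vt K HK Kt x). split; [auto|tauto].
Qed.
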